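(* Let $\tau\in[0,1]$ and suppose the decision tree $T$ is everywhere $\tau$-influential with respect to $f:\{0,1\}^n\to\{0,1\}$. Then for every $i\in[n]$, $\mathrm{Inf}_i[f]\ge\tau\cdot\delta_i(T)$.
   Context: $\mathrm{Inf}_i[g]=\Pr_{x\sim\{0,1\}^n}[g(x)\ne g(x^{\oplus i})]$ for uniform $x$. For an internal node $v$ of $T$, $\mathrm{ind}(v)$ is the index of the variable queried at $v$, and $f_v$ is the restriction of $f$ induced by the root-to-$v$ path. $T$ is everywhere $\tau$-influential w.r.t. $f$ if $\mathrm{Inf}_{\mathrm{ind}(v)}[f_v]\ge\tau$ for every internal node $v$. $\delta_i(T)=\Pr_{x\sim\{0,1\}^n}[T\text{ queries }x_i\text{ on input }x]$. *)

From mathcomp Require Import all_boot all_order all_algebra.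
Set Implicit Arguments. Unset Strict Implicit. Unset Printing Implicit Defensive.
Import Order.TTheory GRing.Theory Num.Theory.
Local Open Scope ring_scope.

(* Points of the Boolean cube {0,1}^n (false = 0, true = 1). *)
Definition cube (n : nat) := {ffun 'I_n -> bool}.

Definition flip n (i : 'I_n) (x : cube n) : cube n :=
  [ffun j => if j == i then ~~ x j else x j].

Definition prob (R : realFieldType) n (A : {set cube n}) : R :=
  #|A|%:R / (2 ^ n)%:R.

Definition Inf (R : realFieldType) n (g : cube n -> bool) (i : 'I_n) : R :=
  prob R [set x : cube n | g x != g (flip i x)].

(* Decision trees over n Boolean variables: a leaf outputs a bit; an internal
   node queries variable i, goes to the first subtree if x_i = 0 and to the
   second if x_i = 1. *)
Inductive dtree (n : nat) : Type :=
| Leaf : bool -> dtree n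
| Node : 'I_n -> dtree n -> dtree n -> dtree n.
Arguments Leaf {n}.

Definition setc n (x : cube n) (i : 'I_n) (b : bool) : cube n :=
  [ffun j => if j == i then b else x j].

(* Restriction of f induced by a root-to-node path (list of (queried variable,
   branch taken)), viewed as a function on {0,1}^n that ignores the fixed
   coordinates. *)
Definition restrict n (f : cube n -> bool) (p : seq ('I_n * bool)) : cube n -> bool :=
  fun x => f (foldl (fun y ib => setc y ib.1 ib.2) x p).

Fixpoint everywhere_infl_from (R : realFieldType) n (f : cube n -> bool) (tau : R)
  (p : seq ('I_n * bool)) (T : dtree n) : Prop :=
  match T with
  | Leaf _ => True
  | Node i l r =>
      tau <= Inf R (restrict f p) i /\
      everywhere_infl_from f tau (rcons p (i, false)) l /\
      everywhere_infl_from f tau (rcons p (i, true)) r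
  end.

Definition everywhere_infl (R : realFieldType) n (T : dtree n) (f : cube n -> bool) (tau : R) :=
  everywhere_infl_from f tau [::] T.

Fixpoint queries n (T : dtree n) (i : 'I_n) (x : cube n) : bool :=
  match T with
  | Leaf _ => false
  | Node j l r => (j == i) || queries (if x j then r else l) i x
  end.

Definition delta (R : realFieldType) n (T : dtree n) (i : 'I_n) : R :=
  prob R [set x : cube n | queries T i x].

From mathcomp Require Import all_boot all_order all_algebra.
From mathcomp Require Import ring.
Set Implicit Arguments. Unset Strict Implicit. Unset Printing Implicit Defensive.
Import Order.TTheory GRing.Theory Num.Theory.
Local Open Scope ring_scope.

(* Induction on the tree, carrying the path p to the current node.  Running T
   on x with the coordinates of p fixed, let delta_p be the probability that
   x_i gets queried; we show tau * delta_p <= Inf_i[f_p].  At a node querying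
   i this holds since delta_p <= 1 and Inf_i[f_p] >= tau.  At a node querying
   j <> i, the variable j is free in f_p (a fixed variable has influence 0,
   which forces the trivial case tau = 0), and both delta_p and Inf_i[f_p] are the averages of the corresponding
   quantities of the two children, obtained by fixing x_j to 0 or to 1. *)

Section Cube.

Variable n : nat.
Implicit Types (x : cube n) (i j : 'I_n) (b : bool) (p : seq ('I_n * bool)).

Lemma setcE x j b k : setc x j b k = if k == j then b else x k.
Proof. by rewrite ffunE. Qed.

Lemma flipE x i k : flip i x k = if k == i then ~~ x k else x k.
Proof. by rewrite ffunE. Qed.

Lemma flip_inj i : injective (@flip n i).
Proof.
apply: (can_inj (g := flip i)) => x; apply/ffunP=> k.
by rewrite !flipE; case: eqP => // _; rewrite negbK.
Qed.

Lemma setc_id x j : setc x j (x j) = x.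
Proof. by apply/ffunP=> k; rewrite setcE; case: eqP => // ->. Qed.

Lemma setc_negb x j : setc x j (~~ x j) = flip j x.
Proof. by apply/ffunP=> k; rewrite setcE flipE; case: eqP => // ->. Qed.

Lemma setc_flip x j b : setc (flip j x) j b = setc x j b.
Proof. by apply/ffunP=> k; rewrite !setcE flipE; case: eqP. Qed.

Lemma setcC x j k b c : j != k -> setc (setc x j b) k c = setc (setc x k c) j b.
Proof.
move=> jk; apply/ffunP=> l; rewrite !setcE.
by case: (eqVneq l k) => [->|//]; rewrite eq_sym (negbTE jk).
Qed.

Lemma flip_setc x i j b : i != j -> flip i (setc x j b) = setc (flip i x) j b.
Proof.
move=> ij; apply/ffunP=> l; rewrite !setcE !flipE !setcE.
by case: (eqVneq l j) => [->|//]; rewrite eq_sym (negbTE ij).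
Qed.

Lemma card_cube : #|{: cube n}| = (2 ^ n)%N.
Proof. by rewrite card_ffun card_bool card_ord. Qed.

Lemma card_set_sum (P : pred (cube n)) : #|[set x | P x]| = (\sum_x P x)%N.
Proof. by rewrite -sum1dep_card big_mkcond; apply: eq_bigr => x _; case: (P x). Qed.

(* For every x, {setc x j false, setc x j true} = {x, flip j x}, and flip j is a bijection. *)
Lemma card_setc_pair j (P : pred (cube n)) :
  (#|[set x | P (setc x j false)]| + #|[set x | P (setc x j true)]|)%N
  = (#|[set x | P x]| * 2)%N.
Proof.
have sum_flip : (\sum_x P (flip j x) = \sum_x P x)%N.
  by rewrite [RHS](reindex_inj (@flip_inj j)).
rewrite !card_set_sum -big_split /= muln2 -addnn -{2}sum_flip -big_split /=.
apply: eq_bigr => x _.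
by case: (x j) (setc_id x j) (setc_negb x j) => -> -> //; rewrite addnC.
Qed.

Definition fix_coords p x : cube n := foldl (fun y ib => setc y ib.1 ib.2) x p.

Lemma restrictE (f : cube n -> bool) p x : restrict f p x = f (fix_coords p x).
Proof. by []. Qed.

Lemma fix_coords_rcons p j b x :
  fix_coords (rcons p (j, b)) x = setc (fix_coords p x) j b.
Proof. by rewrite /fix_coords foldl_rcons. Qed.

Lemma fix_coords_setc p x j b : j \notin map fst p ->
  fix_coords p (setc x j b) = setc (fix_coords p x) j b.
Proof.
elim: p x => [//|[k c] p IHp] x /=; rewrite in_cons negb_or => /andP[jk jp].
by rewrite -IHp // setcC.
Qed.

Lemma fix_coords_flip p x j : j \in map fst p ->
  fix_coords p (flip j x) = fix_coords p x.
Proof.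
elim: p x => [//|[k c] p IHp] x /=; rewrite in_cons.
case: (eqVneq j k) => [->|jk] /= jp; first by rewrite setc_flip.
by rewrite -flip_setc // IHp.
Qed.

Section Prob.

Variable R : realFieldType.

Lemma prob_ge0 (A : {set cube n}) : 0 <= prob R A.
Proof. by rewrite divr_ge0 ?ler0n. Qed.

Lemma prob_set0 : prob R (set0 : {set cube n}) = 0.
Proof. by rewrite /prob cards0 mul0r. Qed.

Lemma prob_le1 (A : {set cube n}) : prob R A <= 1.
Proof.
rewrite ler_pdivrMr ?ltr0n ?expn_gt0 // mul1r ler_nat -card_cube.
exact: max_card.
Qed.

Lemma prob_split j (P : pred (cube n)) :
  prob R [set x | P x]
  = (prob R [set x | P (setc x j false)] + prob R [set x | P (setc x j true)]) / 2.
Proof.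
rewrite /prob -mulrDl -natrD card_setc_pair natrM.
by field; rewrite pnatr_eq0 expn_eq0.
Qed.

Lemma Inf_ge0 (g : cube n -> bool) i : 0 <= Inf R g i.
Proof. exact: prob_ge0. Qed.

Lemma eq_Inf (g h : cube n -> bool) i : g =1 h -> Inf R g i = Inf R h i.
Proof. by move=> gh; congr prob; apply/setP=> x; rewrite !inE !gh. Qed.

Lemma Inf_split (g : cube n -> bool) i j : i != j ->
  Inf R g i
  = (Inf R (fun x => g (setc x j false)) i + Inf R (fun x => g (setc x j true)) i) / 2.
Proof.
move=> ij; rewrite /Inf (prob_split j).
by congr ((_ + _) / _); congr prob; apply/setP=> x; rewrite !inE flip_setc.
Qed.

Definition delta_from (T : dtree n) i p : R :=
  prob R [set x | queries T i (fix_coords p x)].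

Lemma Inf_restrict_fixed (f : cube n -> bool) p j : j \in map fst p ->
  Inf R (restrict f p) j = 0.
Proof.
move=> jp; rewrite /Inf.
have -> : [set x | restrict f p x != restrict f p (flip j x)] = set0.
  by apply/setP=> x; rewrite !inE !restrictE fix_coords_flip // eqxx.
exact: prob_set0.
Qed.

Lemma Inf_restrict_split (f : cube n -> bool) p i j : i != j -> j \notin map fst p ->
  Inf R (restrict f p) i
  = (Inf R (restrict f (rcons p (j, false))) i
     + Inf R (restrict f (rcons p (j, true))) i) / 2.
Proof.
move=> ij jp; rewrite (Inf_split _ ij).
by congr ((_ + _) / _); apply: eq_Inf => x; rewrite !restrictE fix_coords_rcons fix_coords_setc.
Qed.

Lemma delta_from_Leaf b i p : delta_from (Leaf b) i p = 0.
Proof. by rewrite -prob_set0; congr prob; apply/setP=> x; rewrite !inE. Qed.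

Lemma delta_from_Node j (l r : dtree n) i p : j != i -> j \notin map fst p ->
  delta_from (Node j l r) i p
  = (delta_from l i (rcons p (j, false)) + delta_from r i (rcons p (j, true))) / 2.
Proof.
move=> ji jp; rewrite /delta_from (prob_split j).
congr ((_ + _) / _); congr prob; apply/setP=> x;
  by rewrite !inE /= (negbTE ji) fix_coords_setc // fix_coords_rcons setcE eqxx.
Qed.

Lemma everywhere_infl_from_delta_le (f : cube n -> bool) (tau : R) i T p :
  0 <= tau -> everywhere_infl_from f tau p T ->
  tau * delta_from T i p <= Inf R (restrict f p) i.
Proof.
move=> tau_ge0; elim: T p => [b|j l IHl r IHr] p /=.
  by rewrite delta_from_Leaf mulr0 Inf_ge0.
move=> [infl_j [infl_l infl_r]].
have [<-|ji] := eqVneq j i.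
  by apply: le_trans infl_j; rewrite ler_piMr //; apply: prob_le1.
have [jp|jp] := boolP (j \in map fst p).
  have tau0 : tau = 0 by apply: le_anti; rewrite tau_ge0 andbT -(Inf_restrict_fixed f jp).
  by rewrite tau0 mul0r Inf_ge0.
have ij : i != j by rewrite eq_sym.
rewrite delta_from_Node // (Inf_restrict_split _ ij jp).
rewrite mulrA mulrDr ler_wpM2r ?invr_ge0 ?ler0n //.
exact: lerD (IHl _ infl_l) (IHr _ infl_r).
Qed.

End Prob.

End Cube.

Theorem mainTheorem9 (R : realFieldType) (n : nat) (tau : R)
  (f : cube n -> bool) (T : dtree n) :
  0 <= tau -> tau <= 1 ->
  everywhere_infl T f tau ->
  forall i : 'I_n, tau * delta R T i <= Inf R f i.
Proof.
move=> tau_ge0 _ infl_T i.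
exact: (everywhere_infl_from_delta_le i tau_ge0 infl_T).
Qed.
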